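(* Let $\frac12\le\alpha\le1$ and let $M\in\mathcal{M}^*_{\mathcal{L}}(\alpha)$ be a Latin array of order $n$. If $M$ is not focused, then there exists a cell $(i,j)$ such that $M_{ij}$ is a clone and $|R_i(M)\cup C_j(M)|\ge(\alpha+1)n-1$.
   Context: An array of order $n$ is an $n\times n$ array with a symbol in each cell; an entry is a triple $(i,j,A_{ij})$. An array is Latin if no symbol appears more than once in any row or column; $\mathcal{L}$ denotes the class of all square Latin arrays. A transversal of an $m\times m$ array is a set of $m$ entries, no two agreeing in row, column, or symbol; an array is transversal-free if it has no transversal. A symbol is a singleton if it occurs exactly once in the array and a clone otherwise; $M_{ij}$ is called a singleton/clone according to the symbol in cell $(i,j)$. $R_i(M)$, $C_j(M)$ are the sets of symbols in row $i$ and column $j$. $A(i\mid j)$ is the array obtained by deleting row $i$ and column $j$, and $\Psi_{ij}(A)$ is the set of symbols appearing in $A$ but not in $A(i\mid j)$. A Latin array $L$ of order $n$ is focused if every singleton of $L$ occurs in a row or a column of $L$ that contains only singletons, and $|\Psi_{ij}(L)|=2n-1$ for some $(i,j)$. For $\frac12\le\alpha\le1$, $\mathcal{M}_{\mathcal{L}}(\alpha)$ is the set of transversal-free arrays in $\mathcal{L}$ whose number of distinct symbols is at least $\alpha$ times the number of cells, and $\mathcal{M}^*_{\mathcal{L}}(\alpha)$ consists of those $A\in\mathcal{M}_{\mathcal{L}}(\alpha)$ such that no array in $\mathcal{M}_{\mathcal{L}}(\alpha)$ has smaller order than $A$, and no array in $\mathcal{M}_{\mathcal{L}}(\alpha)$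 of the same order as $A$ has more distinct symbols than $A$. *)

From HB Require Import structures.
From mathcomp Require Import all_boot all_order all_algebra.
Set Implicit Arguments. Unset Strict Implicit. Unset Printing Implicit Defensive.
Import Order.TTheory GRing.Theory Num.Theory.

Definition array (n : nat) := 'I_n -> 'I_n -> nat.

Definition latin n (A : array n) : Prop :=
  (forall i j j', A i j = A i j' -> j = j') /\
  (forall i i' j, A i j = A i' j -> i = i').

Definition is_transversal n (A : array n) (T : {set 'I_n * 'I_n}) : Prop :=
  #|T| = n /\
  (forall c d, c \in T -> d \in T -> c != d ->
     [/\ c.1 != d.1, c.2 != d.2 & A c.1 c.2 != A d.1 d.2]).

Definition transversal_free n (A : array n) : Prop :=
  forall T, ~ is_transversal A T.

Definition cells_syms n (A : array n) : seq nat :=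
  [seq A i j | i <- enum 'I_n, j <- enum 'I_n].

Definition nsym n (A : array n) : nat := size (undup (cells_syms A)).

Definition singleton n (A : array n) (s : nat) : bool :=
  count_mem s (cells_syms A) == 1%N.

Definition clone n (A : array n) (s : nat) : bool :=
  (s \in cells_syms A) && ~~ singleton A s.

Definition row_syms n (A : array n) (i : 'I_n) : seq nat := [seq A i j | j <- enum 'I_n].
Definition col_syms n (A : array n) (j : 'I_n) : seq nat := [seq A i j | i <- enum 'I_n].

Definition rc_card n (A : array n) (i j : 'I_n) : nat :=
  size (undup (row_syms A i ++ col_syms A j)).

Definition minor_syms n (A : array n) (i j : 'I_n) : seq nat :=
  [seq A k l | k <- [seq k <- enum 'I_n | k != i], l <- [seq l <- enum 'I_n | l != j]].

Definition psi_card n (A : array n) (i j : 'I_n) : nat :=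
  size (undup [seq s <- cells_syms A | s \notin minor_syms A i j]).

Definition focused n (A : array n) : Prop :=
  (forall i j, singleton A (A i j) ->
     (forall j', singleton A (A i j')) \/ (forall i', singleton A (A i' j))) /\
  (exists i j, psi_card A i j = (2 * n - 1)%N).

Definition inM (R : realFieldType) (alpha : R) n (A : array n) : Prop :=
  latin A /\ transversal_free A /\
  (alpha * (n * n)%:R <= (nsym A)%:R)%R.

Definition inMstar (R : realFieldType) (alpha : R) n (A : array n) : Prop :=
  inM alpha A /\
  (forall m (B : array m), inM alpha B -> (n <= m)%N) /\
  (forall B : array n, inM alpha B -> (nsym B <= nsym A)%N).

(* Suppose every clone cell (i, j) had |R_i ∪ C_j| < (alpha + 1) n - 1, that is,
   |R_i ∩ C_j| > (1 - alpha) n + 1.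

   If a singleton cell (i, j) shares its row with a clone cell (i, j') and its column with a
   clone cell (i', j), deleting row i and column j leaves a transversal-free Latin array of
   order n - 1 (a transversal of it extends by the singleton), so by minimality of n it has
   fewer than alpha (n - 1)^2 symbols and more than alpha (2n - 1) symbols are lost.  But the
   symbols of R_i ∩ C_j' other than M_ij', and of C_j ∩ R_i' other than M_i'j, survive the
   deletion, so the large intersections leave fewer than 2 alpha n - 1 symbols to be lost.

   Otherwise every singleton lies in a row or a column of singletons, and as M is not focused,
   up to transposition the singletons fill r whole rows while every column contains a clone.
   Then each clone occurs at most m = n - r times and |R_a ∩ C_b| <= m on clone cells.  Double
   counting bounds the sum of |R_a ∩ C_b| over the m n clone cells by the sum of the squared
   multiplicities of the clones; together with alpha n^2 <= #symbols = #clones + r n this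
   forces r >= alpha n - 1, while a single clone cell gives (1 - alpha) n + 1 < m. *)

From mathcomp Require Import all_boot all_order all_algebra.
From mathcomp Require Import zify lra.
Import Order.TTheory GRing.Theory Num.Theory.
Set Implicit Arguments. Unset Strict Implicit. Unset Printing Implicit Defensive.

Lemma count_sumE (T : Type) (a : pred T) (s : seq T) : count a s = \sum_(x <- s) a x.
Proof. by rewrite -sum1_count big_mkcond; apply: eq_bigr => x _; case: (a x). Qed.

Lemma count_predIC (T : Type) (a b : pred T) (s : seq T) :
  count a s = count (predI b a) s + count (predI (predC b) a) s.
Proof. by rewrite -!count_filter count_predC size_filter. Qed.

Lemma count_disjoint_leq (T : Type) (a b : pred T) (s : seq T) :
  (forall x, a x -> ~~ b x) -> count a s + count b s <= size s.
Proof.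
move=> ab; rewrite -count_predUI (@eq_count _ (predI a b) pred0) ?count_pred0 ?addn0.
  exact: count_size.
by move=> x /=; case ax: (a x); rewrite //= (negbTE (ab x ax)).
Qed.

Section UndupCount.
Variable T : eqType.
Implicit Types s t : seq T.

Lemma size_undup_cat_uniq s t : uniq s -> uniq t ->
  size (undup (s ++ t)) + count (mem s) t = size s + size t.
Proof.
move=> us ut.
have -> : size (undup (s ++ t)) = size (s ++ filter (predC (mem s)) t).
  apply: perm_size; apply: uniq_perm; rewrite ?undup_uniq //.
    rewrite cat_uniq us filter_uniq // andbT; apply/hasPn => x.
    by rewrite mem_filter => /andP [].
  by move=> x; rewrite mem_undup !mem_cat mem_filter /=; case: (x \in s).
by rewrite size_cat size_filter -addnA [X in _ + X]addnC count_predC.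
Qed.

Lemma count_mem_uniqC s t : uniq s -> uniq t -> count (mem s) t = count (mem t) s.
Proof.
move=> us ut; rewrite -!size_filter; apply: perm_size.
by apply: uniq_perm; rewrite ?filter_uniq // => x; rewrite !mem_filter andbC.
Qed.

Lemma size_undup_filter_notin s t : {subset t <= s} ->
  size (undup s) = size (undup t) + size (undup [seq x <- s | x \notin t]).
Proof.
move=> ts; rewrite -size_cat; apply: perm_size; apply: uniq_perm; rewrite ?undup_uniq //.
  rewrite cat_uniq !undup_uniq andbT /=; apply/hasPn => x.
  by rewrite !mem_undup mem_filter => /andP [].
move=> x; rewrite mem_cat !mem_undup mem_filter.
by case xt: (x \in t); rewrite //= ts.
Qed.

Lemma mem_leq_count_mem (x : T) s : (x \in s) <= count_mem x s.
Proof. by rewrite -has_pred1 has_count; case: (count_mem x s). Qed.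

Lemma sum_undup_count_mem s (F : T -> nat) :
  \sum_(u <- undup s) count_mem u s * F u = \sum_(x <- s) F x.
Proof.
rewrite -[RHS]big_undup_iterop_count; apply: eq_bigr => u _.
by rewrite Monoid.iteropE iter_addn_0 mulnC.
Qed.

End UndupCount.

Definition transpose n (A : array n) : array n := fun i j => A j i.

Definition rc_inter n (A : array n) (i j : 'I_n) : nat :=
  count (mem (row_syms A i)) (col_syms A j).

Definition singleton_row n (A : array n) (i : 'I_n) : bool := [forall j, singleton A (A i j)].
Definition singleton_col n (A : array n) (j : 'I_n) : bool := [forall i, singleton A (A i j)].

Section ArrayCounts.
Variables (n : nat) (M : array n).

Lemma sum_cells_syms (F : nat -> nat) :
  \sum_(s <- cells_syms M) F s = \sum_(a < n) \sum_(b < n) F (M a b).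
Proof. by rewrite big_allpairs_dep /= big_enum; apply: eq_bigr => a _; rewrite big_enum. Qed.

Lemma count_cells_syms (P : pred nat) :
  count P (cells_syms M) = \sum_(a < n) \sum_(b < n) P (M a b).
Proof. by rewrite count_sumE sum_cells_syms. Qed.

Lemma count_row_syms a (P : pred nat) : count P (row_syms M a) = \sum_(b < n) P (M a b).
Proof. by rewrite count_sumE big_map big_enum. Qed.

Lemma count_col_syms b (P : pred nat) : count P (col_syms M b) = \sum_(a < n) P (M a b).
Proof. by rewrite count_sumE big_map big_enum. Qed.

Lemma size_row_syms a : size (row_syms M a) = n.
Proof. by rewrite size_map size_enum_ord. Qed.

Lemma size_col_syms b : size (col_syms M b) = n.
Proof. by rewrite size_map size_enum_ord. Qed.

Lemma mem_row_syms a b : M a b \in row_syms M a.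
Proof. by apply: map_f; rewrite mem_enum. Qed.

Lemma mem_col_syms a b : M a b \in col_syms M b.
Proof. by apply: map_f; rewrite mem_enum. Qed.

Lemma mem_cells_syms a b : M a b \in cells_syms M.
Proof. by apply: (allpairs_f (fun k l => M k l)); rewrite mem_enum. Qed.

Lemma row_symsP a s : s \in row_syms M a -> exists b, s = M a b.
Proof. by case/mapP => b _ ->; exists b. Qed.

Lemma col_symsP b s : s \in col_syms M b -> exists a, s = M a b.
Proof. by case/mapP => a _ ->; exists a. Qed.

Lemma cells_symsP s : s \in cells_syms M -> exists a b, s = M a b.
Proof. by case/allpairsP => [[a b] [_ _ ->]]; exists a, b. Qed.

Lemma singleton_cell_eq a b c d :
  singleton M (M a b) -> M c d = M a b -> c = a /\ d = b.
Proof.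
rewrite /singleton count_cells_syms pair_big /= => single e.
case: (eqVneq (c, d) (a, b)) => [[-> ->] //|ne].
move: single; rewrite (bigD1 (a, b)) //= (bigD1 (c, d)) /=; last by rewrite ne.
by rewrite e eqxx.
Qed.

Section Latin.
Hypothesis latinM : latin M.

Lemma uniq_row_syms a : uniq (row_syms M a).
Proof. case: latinM => inj_row _; rewrite map_inj_uniq ?enum_uniq // => x y; exact: inj_row. Qed.

Lemma uniq_col_syms b : uniq (col_syms M b).
Proof. case: latinM => _ inj_col; rewrite map_inj_uniq ?enum_uniq // => x y; exact: inj_col. Qed.

Lemma rc_card_add_inter a b : rc_card M a b + rc_inter M a b = 2 * n.
Proof.
rewrite /rc_card /rc_inter size_undup_cat_uniq ?uniq_row_syms ?uniq_col_syms //.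
by rewrite size_row_syms size_col_syms addnn mul2n.
Qed.

Lemma rc_interC a b : rc_inter M a b = count (mem (col_syms M b)) (row_syms M a).
Proof. by rewrite /rc_inter count_mem_uniqC ?uniq_row_syms ?uniq_col_syms. Qed.

End Latin.
End ArrayCounts.

Section Transpose.
Variables (n : nat) (M : array n).

Lemma perm_cells_syms_transpose : perm_eq (cells_syms (transpose M)) (cells_syms M).
Proof. by apply/permP => P; rewrite !count_cells_syms exchange_big. Qed.

Lemma singleton_transpose s : singleton (transpose M) s = singleton M s.
Proof. by rewrite /singleton (permP perm_cells_syms_transpose). Qed.

Lemma nsym_transpose : nsym (transpose M) = nsym M.
Proof. exact/perm_size/perm_undup/perm_mem/perm_cells_syms_transpose. Qed.

Lemma rc_card_transpose a b : rc_card (transpose M) a b = rc_card M b a.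
Proof. by apply/perm_size/perm_undup => s; rewrite !mem_cat orbC. Qed.

Lemma singleton_row_transpose a : singleton_row (transpose M) a = singleton_col M a.
Proof. by apply: eq_forallb => b; rewrite singleton_transpose. Qed.

Lemma singleton_col_transpose b : singleton_col (transpose M) b = singleton_row M b.
Proof. by apply: eq_forallb => a; rewrite singleton_transpose. Qed.

Lemma latin_transpose : latin M -> latin (transpose M).
Proof. by case=> inj_row inj_col; split=> [i j j' | i i' j]; [apply: inj_col | apply: inj_row]. Qed.

Lemma rc_inter_transpose a b : latin M -> rc_inter (transpose M) a b = rc_inter M b a.
Proof. by move=> latinM; rewrite (rc_interC latinM). Qed.

End Transpose.

Section MinorSyms.
Variables (n : nat) (M : array n).

Lemma mem_minor_syms i j k l : k != i -> l != j -> M k l \in minor_syms M i j.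
Proof.
by move=> ki lj; apply: (allpairs_f (fun k l => M k l)); rewrite mem_filter mem_enum andbT.
Qed.

Lemma minor_symsP i j s :
  s \in minor_syms M i j -> exists k l, [/\ k != i, l != j & s = M k l].
Proof.
case/allpairsP => [[k l] [/= ki lj ->]]; exists k, l.
by move: ki lj; rewrite !mem_filter => /andP [-> _] /andP [-> _].
Qed.

Lemma minor_syms_sub i j : {subset minor_syms M i j <= cells_syms M}.
Proof. by move=> s /minor_symsP [k [l [_ _ ->]]]; apply: mem_cells_syms. Qed.

Lemma singleton_notin_minor_syms i j a b : singleton M (M a b) ->
  (a == i) || (b == j) -> M a b \notin minor_syms M i j.
Proof.
move=> single ab; apply/negP => /minor_symsP [k [l [ki lj /esym e]]].
move: ab ki lj; have [-> ->] := singleton_cell_eq single e.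
by move=> /orP [] /eqP ->; rewrite eqxx.
Qed.

End MinorSyms.

Lemma minor_syms_transpose n (M : array n) i j :
  minor_syms (transpose M) j i =i minor_syms M i j.
Proof.
move=> s; apply/idP/idP => /minor_symsP [k [l [k_ne l_ne ->]]].
  exact: mem_minor_syms.
exact: (mem_minor_syms (transpose M) l_ne k_ne).
Qed.

Definition minor_array n (A : array n.+1) (i j : 'I_n.+1) : array n :=
  fun k l => A (lift i k) (lift j l).

Section MinorArray.
Variables (n : nat) (M : array n.+1) (i j : 'I_n.+1).

Lemma cells_syms_minor : cells_syms (minor_array M i j) =i minor_syms M i j.
Proof.
move=> s; apply/idP/idP.
  by case/cells_symsP => k [l ->]; apply: mem_minor_syms; rewrite eq_sym neq_lift.
case/minor_symsP => k [l [ki lj ->]].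
rewrite eq_sym in ki; rewrite eq_sym in lj.
have [k' -> _] := unlift_some ki.
have [l' -> _] := unlift_some lj.
exact: (mem_cells_syms (minor_array M i j) k' l').
Qed.

Lemma latin_minor : latin M -> latin (minor_array M i j).
Proof.
case=> inj_row inj_col; split=> [k l l' | k k' l]; rewrite /minor_array => e.
  exact: lift_inj (inj_row _ _ _ e).
exact: lift_inj (inj_col _ _ _ e).
Qed.

Lemma transversal_free_minor : transversal_free M -> singleton M (M i j) ->
  transversal_free (minor_array M i j).
Proof.
move=> tfM single T [cardT distinctT].
pose f p := (lift i p.1, lift j p.2) : 'I_n.+1 * 'I_n.+1.
have inj_f : injective f.
  by move=> [a b] [c d] e; rewrite [a](lift_inj (congr1 fst e)) [b](lift_inj (congr1 snd e)).
have ij_notin : (i, j) \notin f @: T.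
  by apply/imsetP => -[p _ /(congr1 fst) /eqP]; apply/negP; apply: neq_lift.
have not_ij p : M (lift i p.1) (lift j p.2) != M i j.
  by apply/eqP => /(singleton_cell_eq single) [ei _]; move: (neq_lift i p.1); rewrite ei eqxx.
apply: (tfM ((i, j) |: f @: T)); split.
  by rewrite cardsU1 ij_notin (card_imset _ inj_f) cardT.
move=> c d /setU1P [-> | /imsetP [p pT ->]] /setU1P [-> | /imsetP [q qT ->]] cd.
- by rewrite eqxx in cd.
- by split; rewrite /f /= ?neq_lift // eq_sym not_ij.
- by split; rewrite /f /= ?not_ij // eq_sym neq_lift.
- have pq : p != q by apply: contraNneq cd => ->.
  have [p1 p2 p3] := distinctT p q pT qT pq.
  by split; rewrite /f /= ?(inj_eq lift_inj).
Qed.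

Lemma nsym_minor_add_psi : nsym M = nsym (minor_array M i j) + psi_card M i j.
Proof.
rewrite /nsym /psi_card (size_undup_filter_notin (@minor_syms_sub _ M i j)).
by congr (_ + _); apply/perm_size/perm_undup => s; rewrite cells_syms_minor.
Qed.

End MinorArray.

Local Open Scope ring_scope.

Lemma psi_card_gt (R : realFieldType) (alpha : R) n (M : array n) i j :
  inMstar alpha M -> singleton M (M i j) ->
  alpha * (2 * n%:R - 1) < (psi_card M i j)%:R.
Proof.
case: n M i j => [M [] // | n M i j].
case=> [[latinM [tfM nsymM]] [minimal _]] single.
have minor_small : (nsym (minor_array M i j))%:R < alpha * (n * n)%:R.
  rewrite ltNge; apply/negP => minor_big.
  have inM_minor : inM alpha (minor_array M i j).
    by split; [exact: latin_minor | split; [exact: transversal_free_minor | exact: minor_big]].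
  by have := minimal _ _ inM_minor; rewrite ltnn.
move: nsymM minor_small; rewrite (nsym_minor_add_psi M i j) natrD !natrM -natr1; lra.
Qed.

Local Close Scope ring_scope.

Section LostSymbols.
Variables (n : nat) (M : array n).

Lemma psi_card_lt_lost i j : singleton M (M i j) ->
  psi_card M i j < count [predC minor_syms M i j] (row_syms M i)
                   + count [predC minor_syms M i j] (col_syms M j).
Proof.
move=> single; set P := [predC minor_syms M i j]; set Ri := mem (row_syms M i).
rewrite (count_predIC P Ri (col_syms M j)).
have : 0 < count (predI Ri P) (col_syms M j).
  rewrite -has_count; apply/hasP; exists (M i j); first exact: mem_col_syms.
  by rewrite /= mem_row_syms /= singleton_notin_minor_syms // eqxx.
suff : psi_card M i j <= count P (row_syms M i) + count (predI (predC Ri) P) (col_syms M j).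
  by lia.
rewrite -!size_filter -size_cat; apply: uniq_leq_size (undup_uniq _) _ => s.
rewrite mem_undup mem_filter => /andP [lost /cells_symsP [a [b sab]]].
rewrite mem_cat !mem_filter /= lost andbT; subst s.
case: (eqVneq a i) => [-> | ai]; first by rewrite mem_row_syms.
case: (eqVneq b j) => [-> | bj]; last by rewrite mem_minor_syms in lost.
by rewrite mem_col_syms andbT orbN.
Qed.

Lemma count_row_lost_leq i j j' : latin M -> j' != j ->
  count [predC minor_syms M i j] (row_syms M i) + rc_inter M i j' <= n.+1.
Proof.
move=> latinM j'j; set x := M i j'; set Cj' := mem (col_syms M j').
rewrite (rc_interC latinM) (count_predIC Cj' (pred1 x)).
have at_x : count (predI (pred1 x) Cj') (row_syms M i) <= 1.
  apply: leq_trans (sub_count (a2 := pred1 x) _ _) _; first by move=> s /andP [].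
  by rewrite count_uniq_mem ?uniq_row_syms ?leq_b1.
have disjoint : count [predC minor_syms M i j] (row_syms M i)
       + count (predI (predC (pred1 x)) Cj') (row_syms M i) <= size (row_syms M i).
  apply: count_disjoint_leq => s lost.
  apply/negP => /andP [/= s_ne_x /col_symsP [a sa]]; subst s.
  have ai : a != i by apply: contraNneq s_ne_x => ->.
  by rewrite /= mem_minor_syms in lost.
move: disjoint; rewrite size_row_syms; lia.
Qed.

End LostSymbols.

Lemma count_col_lost_leq n (M : array n) i j i' : latin M -> i' != i ->
  count [predC minor_syms M i j] (col_syms M j) + rc_inter M i' j <= n.+1.
Proof.
move=> latinM i'i; rewrite -(rc_inter_transpose _ _ latinM).
rewrite (eq_count (a2 := [predC minor_syms (transpose M) j i])) => [|s]; last first.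
  by rewrite !inE minor_syms_transpose.
exact: count_row_lost_leq (latin_transpose latinM) i'i.
Qed.

Definition singleton_cells n (A : array n) : nat :=
  \sum_(a < n) \sum_(b < n) singleton A (A a b).
Definition clone_cells n (A : array n) : nat :=
  \sum_(a < n) \sum_(b < n) ~~ singleton A (A a b).
Definition nclones n (A : array n) : nat := count [predC singleton A] (undup (cells_syms A)).
Definition singleton_rows n (A : array n) : nat := \sum_(a < n) singleton_row A a.

Lemma sum_negb_ord n (P : pred 'I_n) : \sum_(a < n) ~~ P a = n - \sum_(a < n) P a.
Proof.
suff : \sum_(a < n) ~~ P a + \sum_(a < n) P a = n by lia.
rewrite -big_split /= (eq_bigr (fun=> 1)) => [|a _]; last by case: (P a).
by rewrite sum_nat_const card_ord muln1.
Qed.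

Section CellCounts.
Variables (n : nat) (M : array n).

Lemma clone_cells_add_singleton_cells : clone_cells M + singleton_cells M = n * n.
Proof.
rewrite -big_split /= (eq_bigr (fun=> n)) => [|a _]; first by rewrite sum_nat_const card_ord.
rewrite -big_split /= (eq_bigr (fun=> 1)) => [|b _]; last by case: (singleton _ _).
by rewrite sum_nat_const card_ord muln1.
Qed.

Lemma nsym_clones_add_singleton_cells : nsym M = nclones M + singleton_cells M.
Proof.
rewrite /nsym -(count_predC [predC singleton M]) /nclones; congr (_ + _).
rewrite /singleton_cells -(sum_cells_syms M (singleton M)) -sum_undup_count_mem count_sumE.
apply: eq_big_seq => u _; rewrite !inE negbK /in_mem /=.
case single: (singleton M u); rewrite ?muln0 // muln1.
by rewrite (eqP single).
Qed.

Section Latin.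
Hypothesis latinM : latin M.

Lemma rc_inter_leq_pairs a b :
  rc_inter M a b <= \sum_(b' < n) \sum_(a' < n) (M a' b == M a b').
Proof.
rewrite rc_interC // count_row_syms; apply: leq_sum => b' _.
by rewrite -(count_col_syms M b (pred1 _)) mem_leq_count_mem.
Qed.

(* A pair (b', a') counted for the clone cell (a, b) has M a' b = M a b'; then M a b' is a clone
   too (a singleton would force b' = b), so the pair can be charged to the cell (a, b'). *)
Lemma sum_clone_rc_inter_leq :
  \sum_(a < n) \sum_(b < n) ~~ singleton M (M a b) * rc_inter M a b <=
  \sum_(a < n) \sum_(b < n) ~~ singleton M (M a b) * count_mem (M a b) (cells_syms M).
Proof.
apply: leq_sum => a _.
apply: (@leq_trans (\sum_(b < n) \sum_(b' < n) \sum_(a' < n)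
                      ~~ singleton M (M a b') * (M a' b == M a b'))).
  apply: leq_sum => b _; apply: leq_trans (leq_mul (leqnn _) (rc_inter_leq_pairs a b)) _.
  rewrite big_distrr; apply: leq_sum => b' _; rewrite big_distrr; apply: leq_sum => a' _ /=.
  case: eqP => [e|]; rewrite ?muln0 // !muln1.
  case single: (singleton M (M a b')); last exact: leq_b1.
  by have [_ ->] := singleton_cell_eq single e; rewrite single.
rewrite exchange_big /=; apply: eq_leq; apply: eq_bigr => b' _.
rewrite count_cells_syms [in RHS]exchange_big big_distrr /=.
by apply: eq_bigr => b _; rewrite big_distrr.
Qed.

Lemma sum_clone_rc_inter_bound m :
  (forall u, ~~ singleton M u -> count_mem u (cells_syms M) <= m) ->
  \sum_(a < n) \sum_(b < n) ~~ singleton M (M a b) * rc_inter M a b + 2 * m * nclones M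
  <= (m + 2) * clone_cells M.
Proof.
move=> clone_le; apply: leq_trans (leq_add sum_clone_rc_inter_leq (leqnn _)) _.
rewrite /clone_cells /nclones.
rewrite -(sum_cells_syms M (fun u => ~~ singleton M u * count_mem u (cells_syms M))).
rewrite -(sum_cells_syms M (fun u => ~~ singleton M u : nat)).
rewrite -!(sum_undup_count_mem (cells_syms M)) count_sumE !big_distrr -big_split /=.
rewrite big_seq [leqRHS]big_seq; apply: leq_sum => u; rewrite mem_undup => u_in.
rewrite /in_mem /=; case single: (singleton M u); rewrite /= ?muln0 // mul1n muln1.
have mult_le := clone_le u (negbT single).
have : 2 <= count_mem u (cells_syms M).
  by move: single u_in; rewrite /singleton -has_pred1 has_count; case: (count_mem u _) => [|[|]].
(* k^2 + 2m <= (m + 2) k, as (k - 2) (k - m) <= 0 *)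
move: mult_le; set k := count_mem u _; nia.
Qed.

End Latin.
End CellCounts.

Lemma transversal_free_gt0 n (A : array n) : transversal_free A -> 0 < n.
Proof. by case: n A => // A tfA; case: (tfA set0); split=> [|[[]]]; rewrite ?cards0. Qed.

Lemma psi_card_singleton_cross n (M : array n) a b : latin M ->
  singleton_row M a -> singleton_col M b -> psi_card M a b = 2 * n - 1.
Proof.
move=> latinM /forallP row_a /forallP col_b.
have -> : psi_card M a b = rc_card M a b.
  apply/perm_size/perm_undup => s; rewrite mem_filter mem_cat; apply/andP/orP.
    case=> lost /cells_symsP [k [l sE]]; subst s.
    case: (eqVneq k a) => [-> | ka]; first by left; rewrite mem_row_syms.
    case: (eqVneq l b) => [-> | lb]; first by right; rewrite mem_col_syms.
    by rewrite mem_minor_syms in lost.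
  case=> [/row_symsP [c ->] | /col_symsP [d ->]]; split; rewrite ?mem_cells_syms //.
    by rewrite singleton_notin_minor_syms ?eqxx.
  by rewrite singleton_notin_minor_syms ?eqxx ?orbT.
have inter1 : rc_inter M a b = 1.
  rewrite /rc_inter (@eq_in_count _ _ (pred1 (M a b))); last first.
    move=> s /col_symsP [d ->] /=; apply/idP/eqP => [/row_symsP [c e] | ->].
      by have [-> ->] := singleton_cell_eq (row_a c) e.
    exact: mem_row_syms.
  by rewrite count_uniq_mem ?uniq_col_syms ?mem_col_syms.
by have := rc_card_add_inter latinM a b; rewrite inter1 => <-; rewrite addnK.
Qed.

Section SingletonRows.
Variables (n : nat) (M : array n).

Lemma singleton_cells_rows : (forall a b, singleton M (M a b) -> singleton_row M a) ->
  singleton_cells M = singleton_rows M * n.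
Proof.
move=> in_row; rewrite /singleton_cells /singleton_rows big_distrl /=; apply: eq_bigr => a _.
case: (boolP (singleton_row M a)) => [/forallP row_a | not_row] /=.
  by rewrite mul1n (eq_bigr (fun=> 1)) ?sum_nat_const ?card_ord ?muln1 // => b _; rewrite row_a.
rewrite mul0n big1 // => b _; case single: (singleton M (M a b)) => //.
by rewrite (in_row a b single) in not_row.
Qed.

Hypothesis latinM : latin M.

Lemma count_clone_leq u : ~~ singleton M u ->
  count_mem u (cells_syms M) <= n - singleton_rows M.
Proof.
move=> clone_u; rewrite count_cells_syms -sum_negb_ord; apply: leq_sum => a _.
case: (boolP (singleton_row M a)) => [/forallP row_a | _] /=.
  by rewrite big1 // => b _; case: eqP => // e; rewrite -e row_a in clone_u.
by rewrite -(count_row_syms M a (pred1 u)) count_uniq_mem ?uniq_row_syms ?leq_b1.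
Qed.

Lemma rc_inter_clone_leq a b : ~~ singleton M (M a b) ->
  rc_inter M a b <= n - singleton_rows M.
Proof.
move=> clone_ab; rewrite /rc_inter count_col_syms -sum_negb_ord; apply: leq_sum => a' _.
case: (boolP (singleton_row M a')) => [/forallP row_a' | _]; last exact: leq_b1.
rewrite leqn0 eqb0; apply/negP => /row_symsP [c e].
by have [ea _] := singleton_cell_eq (row_a' b) (esym e); rewrite ea row_a' in clone_ab.
Qed.

End SingletonRows.

Local Open Scope ring_scope.

(* Here r rows consist of singletons and m = n - r do not, c is the number of clones,
   SI sums |R_a ∩ C_b| over the m n clone cells, each term exceeding (1 - alpha) n + 1. *)
Lemma averaging_bounds_absurd (R : realFieldType) (alpha n r m c SI : R) :
  alpha <= 1 -> 0 < n -> n = r + m -> (1 - alpha) * n + 1 < m ->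
  m * n * ((1 - alpha) * n + 1) <= SI -> SI + 2 * m * c <= (m + 2) * (m * n) ->
  alpha * (n * n) <= c + r * n -> False.
Proof.
move=> alpha_le1 n_gt0 nrm x_lt_m SI_ge SI_le nsym_ge.
have x_ge1 : 0 <= (1 - alpha) * n by rewrite mulr_ge0 ?subr_ge0 // ltW.
have m_gt0 : 0 < m by lra.
have h1 : n * ((1 - alpha) * n + 1) + 2 * c <= (m + 2) * n by rewrite -(ler_pM2l m_gt0); lra.
have h2 : (1 - alpha) * n + 1 + 2 * (alpha * n - r) <= m + 2 by rewrite -(ler_pM2l n_gt0); lra.
lra.
Qed.

Section CloneRcSmall.
Variables (R : realFieldType) (alpha : R) (n : nat) (M : array n).
Hypotheses (alpha_le1 : alpha <= 1) (latinM : latin M).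
Hypothesis clone_rc_small : forall a b,
  ~~ singleton M (M a b) -> (rc_card M a b)%:R < (alpha + 1) * n%:R - 1.

Lemma clone_rc_inter_gt a b :
  ~~ singleton M (M a b) -> (1 - alpha) * n%:R + 1 < (rc_inter M a b)%:R.
Proof.
move/clone_rc_small; have := rc_card_add_inter latinM a b.
by move/(congr1 (fun k => k%:R : R)); rewrite natrD natrM; lra.
Qed.

Lemma singleton_between_clones i j i' j' : inMstar alpha M -> singleton M (M i j) ->
  ~~ singleton M (M i j') -> ~~ singleton M (M i' j) -> False.
Proof.
move=> starM single clone_ij' clone_i'j.
have j'j : j' != j by apply: contraNneq clone_ij' => ->.
have i'i : i' != i by apply: contraNneq clone_i'j => ->.
have := psi_card_gt starM single; have := alpha_le1.
have := clone_rc_inter_gt clone_ij'; have := clone_rc_inter_gt clone_i'j.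
have := psi_card_lt_lost single.
have := count_row_lost_leq i latinM j'j; have := count_col_lost_leq j latinM i'i.
rewrite -!(ler_nat R) !natrD -!natr1; lra.
Qed.

Lemma singleton_rows_absurd : alpha * (n * n)%:R <= (nsym M)%:R -> (0 < n)%N ->
  (forall a b, singleton M (M a b) -> singleton_row M a) ->
  (forall b, ~~ singleton_col M b) -> False.
Proof.
move=> nsymM n_gt0 in_row no_col.
set r := singleton_rows M; set m := (n - r)%N.
set SI := (\sum_(a < n) \sum_(b < n) ~~ singleton M (M a b) * rc_inter M a b)%N.
have [a0 clone0] : exists a, ~~ singleton M (M a (Ordinal n_gt0)).
  by apply/existsP; rewrite -negb_forall no_col.
have r_le_n : (r <= n)%N.
  rewrite -[leqRHS]card_ord -sum1_card; apply: leq_sum => a _; exact: leq_b1.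
have cellsE : clone_cells M = (m * n)%N.
  by rewrite mulnBl -(clone_cells_add_singleton_cells M) (singleton_cells_rows in_row) addnK.
have := sum_clone_rc_inter_bound latinM (count_clone_leq latinM).
rewrite -/r -/m -/SI => SI_le.
have SI_ge : (clone_cells M)%:R * ((1 - alpha) * n%:R + 1) <= SI%:R.
  rewrite /clone_cells /SI !natr_sum mulr_suml; apply: ler_sum => a _.
  rewrite !natr_sum mulr_suml; apply: ler_sum => b _.
  case: (boolP (singleton M (M a b))) => [_ | clone_ab]; first by rewrite mul0r mul0n.
  by rewrite mul1r mul1n ltW ?clone_rc_inter_gt.
apply: (@averaging_bounds_absurd _ alpha n%:R r%:R m%:R (nclones M)%:R SI%:R alpha_le1).
- by rewrite ltr0n.
- by rewrite -natrD subnKC.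
- apply: lt_le_trans (clone_rc_inter_gt clone0) _.
  by rewrite ler_nat rc_inter_clone_leq.
- by rewrite -natrM -cellsE.
- by move: SI_le; rewrite -(ler_nat R) cellsE !(natrD, natrM).
- move: nsymM; rewrite nsym_clones_add_singleton_cells (singleton_cells_rows in_row).
  by rewrite !(natrD, natrM).
Qed.

End CloneRcSmall.

Lemma singleton_cols_absurd (R : realFieldType) (alpha : R) n (M : array n) :
  alpha <= 1 -> latin M ->
  (forall a b, ~~ singleton M (M a b) -> (rc_card M a b)%:R < (alpha + 1) * n%:R - 1) ->
  alpha * (n * n)%:R <= (nsym M)%:R -> (0 < n)%N ->
  (forall a b, singleton M (M a b) -> singleton_col M b) ->
  (forall a, ~~ singleton_row M a) -> False.
Proof.
move=> alpha_le1 latinM clone_rc_small nsymM n_gt0 in_col no_row.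
apply: (singleton_rows_absurd alpha_le1 (latin_transpose latinM) _ _ n_gt0).
- by move=> a b; rewrite singleton_transpose rc_card_transpose; apply: clone_rc_small.
- by rewrite nsym_transpose.
- by move=> a b; rewrite singleton_transpose singleton_row_transpose; apply: in_col.
- by move=> b; rewrite singleton_col_transpose.
Qed.

Unset Implicit Arguments.

Theorem mainTheorem11 (R : realFieldType) (alpha : R)
  (ha1 : (2%:R^-1 <= alpha)%R) (ha2 : (alpha <= 1)%R)
  (n : nat) (M : array n) :
  inMstar alpha M -> ~ focused M ->
  exists i j : 'I_n, clone M (M i j) /\
    ((alpha + 1) * n%:R - 1 <= (rc_card M i j)%:R)%R.
Proof.
move=> starM not_focused; have [[latinM [tfM nsymM]] _] := starM.
have n_gt0 := transversal_free_gt0 tfM.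
set bound := (alpha + 1) * n%:R - 1.
case: (boolP [exists a, exists b, ~~ singleton M (M a b) && (bound <= (rc_card M a b)%:R)]).
  case/existsP => a /existsP [b /andP [clone_ab big]].
  by exists a, b; rewrite /clone mem_cells_syms.
move/existsPn => none; exfalso.
have clone_rc_small a b : ~~ singleton M (M a b) -> (rc_card M a b)%:R < bound.
  by move=> clone_ab; move/existsPn: (none a) => /(_ b); rewrite clone_ab ltNge.
case: (boolP [exists a, exists b,
                [&& singleton M (M a b), ~~ singleton_row M a & ~~ singleton_col M b]]).
  case/existsP => i /existsP [j /and3P [single /forallPn [j' clone_ij'] /forallPn [i' clone_i'j]]].
  exact: (singleton_between_clones ha2 latinM clone_rc_small starM single clone_ij' clone_i'j).
move/existsPn => lines.
have in_line a b : singleton M (M a b) -> singleton_row M a || singleton_col M b.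
  by move=> single; move/existsPn: (lines a) => /(_ b); rewrite single /= negb_and !negbK.
have : ~~ ([exists a, singleton_row M a] && [exists b, singleton_col M b]).
  apply/negP => /andP [/existsP [a row_a] /existsP [b col_b]]; apply: not_focused; split.
    by move=> i j /in_line /orP [] /forallP; [left | right].
  by exists a, b; apply: psi_card_singleton_cross.
rewrite negb_and => /orP [/existsPn no_row | /existsPn no_col].
- apply: (singleton_cols_absurd ha2 latinM clone_rc_small nsymM n_gt0 _ no_row).
  by move=> a b /in_line; rewrite (negbTE (no_row a)).
- apply: (singleton_rows_absurd ha2 latinM clone_rc_small nsymM n_gt0 _ no_col).
  by move=> a b /in_line; rewrite (negbTE (no_col b)) orbF.
Qed.
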